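(* In the Mallows setting, $W(1,0)=1$, and for every $N\ge2$ and $0\le k\le N-1$, $$W(N,k)=\theta\,[N-1]_\theta\,W(N-1,k)+\theta^{N-k-1}\,[k]_\theta\,[N-2]_\theta!,$$ where $W(N-1,N-1):=0$.
   Context: Permutations of $\{1,\dots,N\}$ are written in one-line notation; $\mathfrak S_N$ is the set of all of them. An entry $\pi_j$ is a left-to-right maximum if $\pi_j>\pi_i$ for all $i<j$. $\mathrm{inv}(\pi)$ is the number of pairs $i<j$ with $\pi_i>\pi_j$. For $0\le k\le N-1$, a permutation $\pi\in\mathfrak S_N$ is $k$-winnable if the first index $j>k$ such that $\pi_j$ is a left-to-right maximum satisfies $\pi_j=N$. Mallows setting: - $W(N,k)=\sum_{k\text{-winnable }\pi\in\mathfrak S_N}\theta^{\mathrm{inv}(\pi)}$, with $W(N,N):=0$; - $[m]_\theta=1+\theta+\cdots+\theta^{m-1}$ (so $[0]_\theta=0$); - $[m]_\theta!=[1]_\theta[2]_\theta\cdots[m]_\theta$, with $[0]_\theta!=1$. *)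

From mathcomp Require Import all_boot all_order all_algebra all_fingroup.
Set Implicit Arguments. Unset Strict Implicit. Unset Printing Implicit Defensive.
Import GRing.Theory.
Local Open Scope ring_scope.

(* Permutations of {1..N} are modelled as s : 'S_N = {perm 'I_N}; position
   j (1-based) corresponds to the ordinal j-1, value v (1-based) to v-1.
   So pi_j = (s (j-1)) + 1. *)

Definition ltr_max N (s : 'S_N) (j : 'I_N) : bool :=
  [forall i : 'I_N, (i < j)%N ==> (s i < s j)%N].

Definition inv N (s : 'S_N) : nat :=
  #|[set p : 'I_N * 'I_N | (p.1 < p.2)%N && (s p.2 < s p.1)%N]|.

(* k-winnable: the first 1-based index j > k (i.e. 0-based position >= k)
   that is a left-to-right maximum carries the value N (0-based: N-1). *)
Definition winnable N (k : nat) (s : 'S_N) : bool :=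
  [exists j : 'I_N,
     [&& (k <= j)%N, ltr_max s j,
         [forall i : 'I_N, ((k <= i)%N && (i < j)%N) ==> ~~ ltr_max s i]
       & (s j == N.-1 :> nat)]].

(* Mallows weighted count; W N N = 0 automatically (no position >= N),
   and we also force W N k = 0 for k >= N to match the convention W(N,N):=0. *)
Definition W (R : comRingType) (theta : R) (N k : nat) : R :=
  if (k < N)%N then \sum_(s : 'S_N | winnable k s) theta ^+ inv s else 0.

Definition qint (R : comRingType) (theta : R) (m : nat) : R :=
  \sum_(i < m) theta ^+ i.
Definition qfact (R : comRingType) (theta : R) (m : nat) : R :=
  \prod_(1 <= i < m.+1) qint theta i.

(* Every s in S_(n+1) is uniquely  extend v t : its last entry is v and its
   first n entries are order-isomorphic to t in S_n.  Appending v creates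
   exactly n - v new inversions (one with each earlier, larger entry), does
   not change which of the first n positions are left-to-right maxima, and
   makes the last position a left-to-right maximum iff v is the largest value.
   Hence, with  weight P = sum_(t | P t) theta^inv(t),  any predicate P on
   S_(n+1) that reduces to Q on t whenever v is not maximal satisfies
     weight P = theta [n] weight Q + weight (P restricted to v maximal)
   (lemma weight_extend).  Applied to all permutations it gives the Mahonian
   identity sum theta^inv = [n]!; applied to k-winnability it gives
     W(n+1,k) = theta [n] W(n,k) + G(n,k),
   where G(n,k) weighs the permutations with no left-to-right maximum at a
   position >= k; applied to that predicate it gives G(n+1,k) = theta [n] G(n,k)
   and G(n,n) = [n]!, whence G(n+1,k) = theta^(n+1-k) [k] [n]!. *)

From Pilot Require Import Defs.
From mathcomp Require Import all_boot all_order all_algebra all_fingroup.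
From mathcomp Require Import zify ring.
Set Implicit Arguments. Unset Strict Implicit. Unset Printing Implicit Defensive.
Import GRing.Theory.

Lemma ltn_lift2 n (h : 'I_n.+1) (i j : 'I_n) : (lift h i < lift h j) = (i < j).
Proof. by rewrite /= !ltnNge leq_bump2. Qed.

Lemma ltn_lift_self n (h : 'I_n.+1) (i : 'I_n) : (h < lift h i) = (h <= i).
Proof. by rewrite /= /bump; case: leqP => /= ?; lia. Qed.

(* extend v t: the permutation of {0..n} whose last entry is v and whose
   first n entries are those of t, with the values >= v shifted up by one. *)
Definition extend n (v : 'I_n.+1) (t : 'S_n) : 'S_n.+1 := lift_perm ord_max v t.

Lemma extend_last n (v : 'I_n.+1) (t : 'S_n) : extend v t ord_max = v.
Proof. exact: lift_perm_id. Qed.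

Lemma extend_lift n (v : 'I_n.+1) (t : 'S_n) i :
  extend v t (lift ord_max i) = lift v (t i).
Proof. exact: lift_perm_lift. Qed.

Lemma extend_inj n : injective (fun p : 'I_n.+1 * 'S_n => extend p.1 p.2).
Proof.
move=> [v t] [v' t'] /= eq_ext.
have eq_v : v = v' by rewrite -(extend_last v t) eq_ext extend_last.
congr (_, _) => //; apply/permP => i; apply: (@lift_inj _ v).
by rewrite -extend_lift eq_ext extend_lift eq_v.
Qed.

Lemma extend_bij n : bijective (fun p : 'I_n.+1 * 'S_n => extend p.1 p.2).
Proof.
apply: inj_card_bij (@extend_inj n) _.
by rewrite card_prod card_ord !card_Sn factS.
Qed.

Lemma sum_Sn_extend (M : nmodType) n (P : pred 'S_n.+1) (F : 'S_n.+1 -> M) :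
  (\sum_(s | P s) F s =
     \sum_(v : 'I_n.+1) \sum_(t | P (extend v t)) F (extend v t))%R.
Proof.
rewrite pair_big_dep (reindex _ (onW_bij _ (extend_bij n))).
by apply: eq_bigl => -[v t].
Qed.

Lemma inv_sum n (s : 'S_n) :
  Defs.inv s = \sum_(j < n) \sum_(i < n) ((i < j) && (s j < s i)).
Proof.
rewrite /Defs.inv exchange_big pair_big /= cardsE -sum1_card big_mkcond /=.
by apply: eq_bigr => p _; rewrite unfold_in; case: ifP.
Qed.

Lemma sum_ord_recr_lift n (F : 'I_n.+1 -> nat) :
  \sum_(i < n.+1) F i = \sum_(i < n) F (lift ord_max i) + F ord_max.
Proof.
rewrite big_ord_recr; congr (_ + _); apply: eq_bigr => i _.
by congr F; apply: val_inj; rewrite [RHS]lift_max.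
Qed.

Lemma count_ge n v : \sum_(u < n) (v <= u) = n - v.
Proof.
elim: n => [|n IH]; first by rewrite big_ord0.
by rewrite big_ord_recr /= IH; case: leqP => /= ?; lia.
Qed.

(* Appending the value v adds one inversion per earlier larger entry, that is,
   n - v of them. *)
Lemma inv_extend n (v : 'I_n.+1) (t : 'S_n) :
  Defs.inv (extend v t) = Defs.inv t + (n - v).
Proof.
rewrite !inv_sum sum_ord_recr_lift; congr (_ + _).
  apply: eq_bigr => j _.
  rewrite sum_ord_recr_lift lift_max ltnNge (ltnW (ltn_ord j)) addn0.
  by apply: eq_bigr => i _; rewrite !extend_lift !lift_max ltn_lift2.
rewrite sum_ord_recr_lift ltnn addn0 extend_last -(count_ge n v).
rewrite (reindex_perm t^-1%g); apply: eq_bigr => i _.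
by rewrite extend_lift permKV lift_max ltn_ord ltn_lift_self.
Qed.

Lemma ltr_max_last n (s : 'S_n.+1) : ltr_max s ord_max = (s ord_max == ord_max).
Proof.
apply/forallP/eqP => [is_max | s_last i].
  have top_pos : s (s^-1%g ord_max) = ord_max by rewrite permKV.
  case: (unliftP ord_max (s^-1%g ord_max)) top_pos => [i ->|-> //] top_pos.
  have := is_max (lift ord_max i); rewrite top_pos lift_max ltn_ord /=.
  by rewrite ltnNge -ltnS ltn_ord.
apply/implyP => lt_i; have ne_top : s i != ord_max.
  by rewrite -s_last (inj_eq perm_inj) neq_ltn lt_i.
by rewrite s_last /= ltn_neqAle -ltnS ltn_ord andbT.
Qed.

Lemma ltr_max_extend_lift n (v : 'I_n.+1) (t : 'S_n) j :
  ltr_max (extend v t) (lift ord_max j) = ltr_max t j.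
Proof.
apply/forallP/forallP => is_max i.
  by have := is_max (lift ord_max i); rewrite !extend_lift !lift_max ltn_lift2.
case: (unliftP ord_max i) => [i' ->|->].
  by rewrite !extend_lift !lift_max ltn_lift2; exact: is_max.
by rewrite lift_max ltnNge (ltnW (ltn_ord j)).
Qed.

Lemma ltr_max_extend_last n (v : 'I_n.+1) (t : 'S_n) :
  ltr_max (extend v t) ord_max = (v == ord_max).
Proof. by rewrite ltr_max_last extend_last. Qed.

Definition no_record_from n k (t : 'S_n) : bool :=
  [forall i : 'I_n, (k <= i) ==> ~~ ltr_max t i].

Lemma no_record_before_extend n (v : 'I_n.+1) (t : 'S_n) k (j : 'I_n) :
  [forall i : 'I_n.+1, (k <= i < lift ord_max j) ==> ~~ ltr_max (extend v t) i]
  = [forall i : 'I_n, (k <= i < j) ==> ~~ ltr_max t i].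
Proof.
apply/forallP/forallP => no_rec i.
  by have := no_rec (lift ord_max i); rewrite !lift_max ltr_max_extend_lift.
case: (unliftP ord_max i) => [i' ->|->].
  by rewrite !lift_max ltr_max_extend_lift; exact: no_rec.
by rewrite lift_max ltnNge (ltnW (ltn_ord j)) andbF.
Qed.

Lemma extend_lift_eq_top n (v : 'I_n.+1) (t : 'S_n) j : v < n ->
  (extend v t (lift ord_max j) == n.+1.-1 :> nat) = (t j == n.-1 :> nat).
Proof.
by move=> lt_v; rewrite extend_lift /= /bump; have := ltn_ord (t j);
  case: leqP => /= ? ?; apply/eqP/eqP; lia.
Qed.

Lemma winnable_extend_low n (v : 'I_n.+1) (t : 'S_n) k : v < n ->
  winnable k (extend v t) = winnable k t.
Proof.
move=> lt_v; apply/existsP/existsP => [[j]|[j]].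
  case: (unliftP ord_max j) => [j' ->|->] /and4P[le_kj rec_j no_rec top_j].
    rewrite no_record_before_extend in no_rec.
    rewrite lift_max in le_kj; rewrite ltr_max_extend_lift in rec_j.
    rewrite (extend_lift_eq_top _ _ lt_v) in top_j.
    by exists j'; rewrite le_kj rec_j top_j no_rec.
  by move: top_j; rewrite extend_last /= => /eqP eq_v; rewrite eq_v ltnn in lt_v.
move=> /and4P[le_kj rec_j no_rec top_j]; exists (lift ord_max j).
rewrite no_record_before_extend no_rec lift_max le_kj ltr_max_extend_lift rec_j.
by rewrite (extend_lift_eq_top _ _ lt_v).
Qed.

(* Appending the maximal value makes the permutation k-winnable exactly when
   t had no left-to-right maximum at positions >= k: the winning record is
   then the last position. *)
Lemma winnable_extend_top n (t : 'S_n) k : k <= n ->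
  winnable k (extend ord_max t) = no_record_from k t.
Proof.
move=> le_kn; apply/existsP/forallP => [[j] win i | no_rec].
  case: (unliftP ord_max j) win => [j' ->|->] /and4P[_ _ no_rec_j top_j].
    by rewrite extend_lift lift_max /= ltn_eqF in top_j.
  have := forallP no_rec_j (lift ord_max i).
  by rewrite ltr_max_extend_lift lift_max ltn_ord andbT.
exists ord_max; rewrite le_kn ltr_max_extend_last extend_last !eqxx andbT /=.
apply/forallP => i; case: (unliftP ord_max i) => [i' ->|->].
  by rewrite ltr_max_extend_lift lift_max ltn_ord andbT; exact: no_rec.
by rewrite ltnn andbF.
Qed.

Lemma no_record_extend n (v : 'I_n.+1) (t : 'S_n) k : k <= n ->
  no_record_from k (extend v t) = (v != ord_max) && no_record_from k t.
Proof.
move=> le_kn; apply/forallP/andP => [no_rec | [ne_v no_rec] i].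
  split; first by have := no_rec ord_max; rewrite ltr_max_extend_last le_kn.
  apply/forallP => i; have := no_rec (lift ord_max i).
  by rewrite lift_max ltr_max_extend_lift.
case: (unliftP ord_max i) => [i' ->|->].
  by rewrite lift_max ltr_max_extend_lift; exact: (forallP no_rec i').
by rewrite ltr_max_extend_last (negbTE ne_v) implybT.
Qed.

Lemma no_record_from_size n (t : 'S_n) : no_record_from n t.
Proof. by apply/forallP => i; rewrite leqNgt ltn_ord. Qed.

Lemma winnable_size n (t : 'S_n) : winnable n t = false.
Proof. by apply/negbTE/existsP => -[j /andP[]]; rewrite leqNgt ltn_ord. Qed.

Local Open Scope ring_scope.

Section Weights.
Variables (R : comRingType) (theta : R).

Definition weight n (P : pred 'S_n) : R := \sum_(t | P t) theta ^+ Defs.inv t.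

Lemma qintS n : qint theta n.+1 = 1 + theta * qint theta n.
Proof.
rewrite /qint big_ord_recl expr0 mulr_sumr; congr (_ + _).
by apply: eq_bigr => i _; rewrite -exprS.
Qed.

(* The weights theta^(n-i) of the n non-maximal appended values sum to
   theta [n]. *)
Lemma sum_pow_rev n : \sum_(i < n) theta ^+ (n - i) = theta * qint theta n.
Proof.
rewrite /qint mulr_sumr (reindex_inj rev_ord_inj); apply: eq_bigr => i _.
by rewrite -exprS; congr (_ ^+ _); have := ltn_ord i; rewrite /=; lia.
Qed.

(* Master recursion: split S_(n+1) by the appended value v; for v < n the
   predicate reduces to Q and the new inversions contribute theta [n]. *)
Lemma weight_extend n (P : pred 'S_n.+1) (Q : pred 'S_n) :
  (forall (i : 'I_n) t, P (extend (lift ord_max i) t) = Q t) ->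
  weight P = theta * qint theta n * weight Q
             + weight (fun t => P (extend ord_max t)).
Proof.
move=> PQ; rewrite /weight sum_Sn_extend (bigD1_ord ord_max) //= addrC.
congr (_ + _); last by apply: eq_bigr => t _; rewrite inv_extend subnn addn0.
rewrite -sum_pow_rev mulr_suml; apply: eq_bigr => i _ /=.
rewrite mulr_sumr; apply: eq_big => [t | t _]; first exact: PQ.
by rewrite inv_extend lift_max exprD mulrC.
Qed.

Lemma qfactS n : qfact theta n.+1 = qfact theta n * qint theta n.+1.
Proof. by rewrite /qfact big_nat_recr. Qed.

Lemma weight_all n : weight (fun _ : 'S_n => true) = qfact theta n.
Proof.
elim: n => [|n IHn].
  rewrite /weight /qfact big_geq // (eq_bigr (fun _ => 1)) => [|t _].
    by rewrite sumr_const card_Sn.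
  by rewrite inv_sum big_ord0.
rewrite (@weight_extend _ _ (fun _ => true)) // IHn qfactS qintS; ring.
Qed.

(* G(n+1,k) = theta [n] G(n,k): the last entry of such a permutation is never
   the maximum. *)
Lemma weight_no_record n k : (k <= n)%N ->
  weight (@no_record_from n.+1 k) =
    theta * qint theta n * weight (@no_record_from n k).
Proof.
move=> le_kn; rewrite (@weight_extend _ _ (no_record_from k)) => [|i t].
  by rewrite [X in _ + X]big_pred0 ?addr0 // => t; rewrite no_record_extend // eqxx.
by rewrite no_record_extend // eq_sym neq_lift.
Qed.

Lemma weight_no_record_size n : weight (@no_record_from n n) = qfact theta n.
Proof. by rewrite -weight_all; apply: eq_bigl => t; rewrite no_record_from_size. Qed.

Lemma weight_no_record_closed n k : (k <= n.+1)%N ->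
  weight (@no_record_from n.+1 k) =
    theta ^+ (n.+1 - k) * qint theta k * qfact theta n.
Proof.
elim: n k => [|n IHn] k; rewrite leq_eqVlt => /orP[/eqP -> | lt_kn];
  try by rewrite weight_no_record_size subnn qfactS; ring.
  rewrite weight_no_record // (_ : k = 0)%N; last by case: k lt_kn.
  by rewrite /qint big_ord0; ring.
rewrite weight_no_record // IHn // qfactS (subSn (ltnSE lt_kn)) exprS; ring.
Qed.

Lemma weight_winnable n k : (k <= n)%N ->
  weight (@winnable n.+1 k) =
    theta * qint theta n * weight (@winnable n k) + weight (@no_record_from n k).
Proof.
move=> le_kn; rewrite (@weight_extend _ _ (winnable k)) => [|i t].
  by congr (_ + _); apply: eq_bigl => t; rewrite winnable_extend_top.
by rewrite winnable_extend_low // lift_max ltn_ord.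
Qed.

Lemma W_weight n k : (k <= n)%N -> W theta n k = weight (@winnable n k).
Proof.
rewrite /W leq_eqVlt => /orP[/eqP -> | -> //].
by rewrite ltnn /weight big_pred0 // => t; rewrite winnable_size.
Qed.

End Weights.

(* For N = m+2 combine the recursion for W(m+2,k) with the closed form of
   G(m+1,k); the case N = 1 is W(1,0) = theta [0] W(0,0) + G(0,0) = 1. *)
Theorem theorem6p3 (R : comRingType) (theta : R) :
  W theta 1 0 = 1 /\
  (forall N k : nat, (2 <= N)%N -> (k <= N.-1)%N ->
     W theta N k =
       theta * qint theta N.-1 * W theta N.-1 k
       + theta ^+ (N - k - 1) * qint theta k * qfact theta (N - 2)).
Proof.
split.
  rewrite W_weight // weight_winnable // weight_no_record_size.
  by rewrite /qint big_ord0 mulr0 mul0r add0r /qfact big_geq.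
case=> [|[|m]] // k _ /= le_k.
rewrite W_weight ?(leq_trans le_k) // weight_winnable // -W_weight //.
rewrite weight_no_record_closed //.
by congr (_ + theta ^+ _ * _ * qfact theta _); lia.
Qed.
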